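(* Let $n>1$ and $P(x)=a_nx^n+a_{n-1}x^{n-1}+\cdots+a_1x$ with integer coefficients $a_i\ge 0$, $a_n\neq 0$, and $\gcd(a_n,\dots,a_1)=1$. Let $(a,b)\in\mathbb{N}^2$. If $\gcd_P(a,b)=1$, then $(a,b)$ is $\mathcal{F}(a_n,\dots,a_1)$-visible.
   Context: $\mathbb{N}$ denotes the positive integers. For $(a,b)\in\mathbb{N}^2$, $\gcd_P(a,b)=\max\{d\in\mathbb{N}: d\mid P(a),\ d\mid b\}$. The family $\mathcal{F}(a_n,\dots,a_1)=\{y=q(a_nx^n+\cdots+a_1x): q\in\mathbb{Q}^+\}$. A point $(r,s)\in\mathbb{N}^2$ is $\mathcal{F}(a_n,\dots,a_1)$-visible if there is $q\in\mathbb{Q}^+$ with $s=q(a_nr^n+\cdots+a_1r)$ and no other point of $\mathbb{N}^2$ lies on the curve $y=q(a_nx^n+\cdots+a_1x)$ between the origin and $(r,s)$. *)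

From mathcomp Require Import all_boot all_order all_algebra.
Set Implicit Arguments. Unset Strict Implicit. Unset Printing Implicit Defensive.
Import Order.TTheory GRing.Theory Num.Theory.

Definition polP (n : nat) (a : nat -> nat) (x : nat) : nat :=
  \sum_(1 <= i < n.+1) a i * x ^ i.

Definition coef_gcd (n : nat) (a : nat -> nat) : nat :=
  \big[gcdn/0]_(1 <= i < n.+1) a i.

(* gcd_P(a,b) = max { d : d | P(a), d | b } = gcd (P a) b  (b > 0) *)
Definition gcdP (n : nat) (a : nat -> nat) (x y : nat) : nat :=
  gcdn (polP n a x) y.

(* (r,s) in N^2 (positive integers) lies on y = q P(x) for some positive rational q,
   and no other point of N^2 on that curve lies between the origin and (r,s). *)
Definition F_visible (n : nat) (a : nat -> nat) (r s : nat) : Prop :=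
  exists q : rat, (0 < q)%R /\ (s%:R = q * (polP n a r)%:R)%R /\
    forall x y : nat, 0 < x -> 0 < y -> x < r ->
      (y%:R <> q * (polP n a x)%:R :> rat)%R.

From mathcomp Require Import all_boot all_order all_algebra.
Import Order.TTheory GRing.Theory Num.Theory.

(* Take q = s / P(r).  A lattice point (x, y) on y = q P(x) with x < r gives
   y P(r) = s P(x); as P(r) is coprime to s it divides P(x), which is absurd
   because 0 < P(x) < P(r). *)

Lemma coprime_frac_mul_not_natr (m k s y : nat) :
  0 < k -> k < m -> coprime m s -> (y%:R <> s%:R / m%:R * k%:R :> rat)%R.
Proof.
move=> k_gt0 k_lt_m co_ms y_eq.
have m_neq0 : (m%:R != 0 :> rat)%R by rewrite pnatr_eq0 -lt0n (leq_ltn_trans _ k_lt_m).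
have cross : y * m = s * k.
  by apply/eqP; rewrite -(eqr_nat rat) !natrM y_eq mulrAC mulfVK.
have m_dvd_k : m %| k by rewrite -(Gauss_dvdr _ co_ms) -cross dvdn_mull.
by move: (dvdn_leq k_gt0 m_dvd_k); rewrite leqNgt k_lt_m.
Qed.

Section Polynomial.

Variables (n : nat) (a : nat -> nat).
Hypotheses (n_gt0 : 0 < n) (an_neq0 : a n != 0).

Lemma polP0 : polP n a 0 = 0.
Proof.
rewrite /polP big_nat big1 // => i /andP[i_gt0 _].
by rewrite exp0n ?muln0.
Qed.

Lemma polP_lt : {homo polP n a : x y / x < y}.
Proof.
move=> x y x_lt_y; rewrite /polP !big_nat_recr //=.
apply: (@leq_ltn_trans (\sum_(1 <= i < n) a i * y ^ i + a n * x ^ n)).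
  rewrite leq_add2r; apply: leq_sum => i _; rewrite leq_mul //.
  by case: i => [|i] //; rewrite leq_exp2r // ltnW.
by rewrite ltn_add2l ltn_pmul2l ?lt0n // ltn_exp2r.
Qed.

Lemma polP_gt0 x : 0 < x -> 0 < polP n a x.
Proof. by move=> x_gt0; rewrite -polP0 polP_lt. Qed.

End Polynomial.

Theorem lemma3p2 (n : nat) (a : nat -> nat) (r s : nat) :
  1 < n -> a n != 0 -> coef_gcd n a = 1 ->
  0 < r -> 0 < s ->
  gcdP n a r s = 1 ->
  F_visible n a r s.
Proof.
move=> n_gt1 an_neq0 _ r_gt0 s_gt0 co_Pr_s.
have n_gt0 : 0 < n := ltnW n_gt1.
have Pr_neq0 : ((polP n a r)%:R != 0 :> rat)%R.
  by rewrite pnatr_eq0 -lt0n polP_gt0.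
exists (s%:R / (polP n a r)%:R)%R; split; [|split].
- by rewrite divr_gt0 // ltr0n ?polP_gt0.
- by rewrite mulfVK.
move=> x y x_gt0 _ x_lt_r.
by apply: coprime_frac_mul_not_natr; rewrite ?polP_gt0 ?polP_lt // /coprime -/(gcdP n a r s) co_Pr_s.
Qed.
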